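(* Let $q$ and $p_0,p_1,\dots,p_N$ be palindromic Laurent polynomials in $\mathbb{R}[t,t^{-1}]$ with $q=\sum_{\ell=0}^{N}p_\ell t^\ell$, and assume that for every $\ell>0$ all coefficients of $p_\ell$ are non-negative. Then $p_\ell=0$ for all $\ell>0$; in particular $q=p_0$.
   Context: A Laurent polynomial $p\in\mathbb{R}[t,t^{-1}]$ is palindromic if $p(t)=p(t^{-1})$. *)

(* A real Laurent polynomial in R[t,t^-1] is represented by its
   coefficient function c : int -> R (c k = coefficient of t^k), required to
   have finite support. *)
From mathcomp Require Import all_boot all_order all_algebra.
From mathcomp Require Import reals.
Set Implicit Arguments. Unset Strict Implicit. Unset Printing Implicit Defensive.
Import Order.TTheory GRing.Theory Num.Theory.
Local Open Scope ring_scope.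

Definition is_laurent (R : realType) (c : int -> R) : Prop :=
  exists n : nat, forall k : int, n%:Z < `|k| -> c k = 0.

(* palindromic: p(t) = p(t^-1), i.e. coefficient of t^k equals that of t^-k *)
Definition palindromic (R : realType) (c : int -> R) : Prop :=
  forall k : int, c (- k) = c k.

(* coefficients of p * t^l *)
Definition shiftL (R : realType) (c : int -> R) (l : nat) : int -> R :=
  fun k => c (k - l%:Z).

(* coefficients of \sum_{l=0}^N p_l t^l *)
Definition sum_shift (R : realType) (p : nat -> int -> R) (N : nat) : int -> R :=
  fun k => \sum_(l < N.+1) shiftL (p l) l k.

(* Evaluate the first moment sum_k k c_k, i.e. the derivative at t = 1.  It
   vanishes for every palindromic Laurent polynomial, and multiplying by t^l
   adds l times the coefficient sum.  Hence 0 = q'(1) = sum_l l p_l(1), a sum of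
   non-negative terms, so p_l(1) = 0 for l > 0; with non-negative coefficients
   this forces p_l = 0. *)
From mathcomp Require Import all_boot all_order all_algebra.
From mathcomp Require Import reals zify.
Set Implicit Arguments. Unset Strict Implicit.
Import Order.TTheory GRing.Theory Num.Theory.
Local Open Scope ring_scope.

Definition window_sum (V : zmodType) (M : nat) (f : int -> V) : V :=
  \sum_(i < (M.*2).+1) f (i%:Z - M%:Z).

Section Window.

Variable V : zmodType.

Lemma window_sum_shift1 M (f : int -> V) :
  f (- M%:Z - 1) = 0 -> f M%:Z = 0 ->
  window_sum M (fun k => f (k - 1)) = window_sum M f.
Proof.
move=> f_left f_right; rewrite /window_sum big_ord_recl big_ord_recr /=.
have -> : 0%:Z - M%:Z - 1 = - M%:Z - 1 by lia.
have -> : (M.*2)%:Z - M%:Z = M%:Z by lia.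
rewrite f_left f_right add0r addr0; apply: eq_bigr => i _.
by congr f; rewrite /bump /=; lia.
Qed.

Lemma window_sum_shift B M (f : int -> V) (l : nat) :
  (forall k, B%:Z < `|k| -> f k = 0) -> (B + l < M)%N ->
  window_sum M (fun k => f (k - l%:Z)) = window_sum M f.
Proof.
move=> f_supp; elim: l => [|l IHl] lt_BlM.
  by apply: eq_bigr => i _; rewrite subr0.
rewrite -IHl; last lia.
rewrite -(@window_sum_shift1 _ (fun k => f (k - l%:Z))); first 1 last.
- by apply: f_supp; lia.
- by apply: f_supp; lia.
by apply: eq_bigr => i _; congr f; lia.
Qed.

End Window.

Section NumWindow.

Variable R : numDomainType.

Lemma window_sum_odd M (f : int -> R) :
  (forall k, f (- k) = - f k) -> window_sum M f = 0.
Proof.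
move=> f_odd; set S := window_sum M f.
have S_opp : S = - S.
  rewrite /S /window_sum {1}(reindex_inj rev_ord_inj) -sumrN.
  apply: eq_bigr => i _; rewrite -f_odd /=; congr f.
  by have := ltn_ord i; lia.
by apply/eqP; rewrite -[_ == _](mulrn_eq0 _ 2) mulr2n {2}S_opp subrr.
Qed.

Lemma window_sum_nonneg_eq0 M (f : int -> R) :
  (forall k, 0 <= f k) -> window_sum M f = 0 ->
  forall k : int, (`|k| <= M)%N -> f k = 0.
Proof.
move=> f_ge0 /(psumr_eq0P (fun i _ => f_ge0 _)) f_eq0 k le_kM.
have lt_kM : (absz (k + M%:Z)%R < (M.*2).+1)%N by lia.
have := f_eq0 (Ordinal lt_kM) isT => /=.
by have -> : (absz (k + M%:Z)%R)%:Z - M%:Z = k by lia.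
Qed.

End NumWindow.

Section Laurent.

Variable R : realType.

Lemma palindromic_moment M (c : int -> R) :
  palindromic c -> window_sum M (fun k => k%:~R * c k) = 0.
Proof.
by move=> c_pal; apply: window_sum_odd => k; rewrite c_pal rmorphN mulNr.
Qed.

Lemma shiftL_moment B M (c : int -> R) (l : nat) :
  (forall k, B%:Z < `|k| -> c k = 0) -> palindromic c -> (B + l < M)%N ->
  window_sum M (fun k => k%:~R * shiftL c l k) = l%:R * window_sum M c.
Proof.
move=> c_supp c_pal lt_BlM; pose g k := (k + l%:Z)%:~R * c k.
transitivity (window_sum M (fun k => g (k - l%:Z))).
  by apply: eq_bigr => i _; rewrite /g /shiftL subrK.
rewrite (window_sum_shift (B := B)) //; last first.
  by move=> k /c_supp c_eq0; rewrite /g c_eq0 mulr0.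
have := palindromic_moment M c_pal; rewrite /g /window_sum => moment_eq0.
under eq_bigr do rewrite intrD mulrDl.
by rewrite big_split /= moment_eq0 add0r mulr_sumr.
Qed.

Lemma is_laurent_common_bound N (p : nat -> int -> R) :
  (forall l, (l <= N)%N -> is_laurent (p l)) ->
  exists B : nat, forall l, (l <= N)%N -> forall k, B%:Z < `|k| -> p l k = 0.
Proof.
elim: N => [|N IHN] p_laurent.
  have [B p0_supp] := p_laurent 0%N (leqnn 0).
  by exists B => l; rewrite leqn0 => /eqP ->.
have [B1 supp1] := IHN (fun l le_lN => p_laurent l (leqW le_lN)).
have [B2 supp2] := p_laurent N.+1 (leqnn _).
exists (maxn B1 B2) => l; rewrite leq_eqVlt => /orP[/eqP -> | lt_lN] k lt_Bk.
  by apply: supp2; lia.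
by apply: supp1; lia.
Qed.

Lemma sum_shift_moment B M N (p : nat -> int -> R) :
  (forall l, (l <= N)%N -> palindromic (p l)) ->
  (forall l, (l <= N)%N -> forall k, B%:Z < `|k| -> p l k = 0) ->
  (B + N < M)%N ->
  window_sum M (fun k => k%:~R * sum_shift p N k) =
  \sum_(l < N.+1) l%:R * window_sum M (p l).
Proof.
move=> p_pal p_supp lt_BNM.
transitivity (\sum_(l < N.+1) window_sum M (fun k => k%:~R * shiftL (p l) l k)).
  rewrite /window_sum exchange_big; apply: eq_bigr => i _.
  by rewrite /sum_shift mulr_sumr.
apply: eq_bigr => l _; have le_lN : (l <= N)%N by rewrite -ltnS.
by apply: shiftL_moment (p_supp l le_lN) (p_pal l le_lN) _; lia.
Qed.

End Laurent.

Theorem lemma6p4 (R : realType) (N : nat) (q : int -> R) (p : nat -> int -> R) :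
  is_laurent q -> palindromic q ->
  (forall l, (l <= N)%N -> is_laurent (p l) /\ palindromic (p l)) ->
  (forall k, q k = sum_shift p N k) ->
  (forall l, (0 < l <= N)%N -> forall k, 0 <= p l k) ->
  (forall l, (0 < l <= N)%N -> forall k, p l k = 0) /\ (forall k, q k = p 0%N k).
Proof.
move=> _ q_pal p_lp q_def p_ge0.
have [B p_supp] := is_laurent_common_bound (fun l le_lN => (p_lp l le_lN).1).
pose M := (B + N).+1.
have moment_eq0 : \sum_(l < N.+1) l%:R * window_sum M (p l) = 0.
  rewrite -(sum_shift_moment (fun l le_lN => (p_lp l le_lN).2) p_supp) //.
  rewrite -(palindromic_moment M q_pal).
  by apply: eq_bigr => i _; rewrite q_def.
have term_ge0 (l : 'I_N.+1) : true -> 0 <= l%:R * window_sum M (p l).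
  move=> _; case: (posnP l) => [-> | l_gt0]; first by rewrite mul0r.
  apply/mulr_ge0/sumr_ge0 => // i _; apply: p_ge0.
  by rewrite l_gt0 -ltnS ltn_ord.
have p_eq0 l : (0 < l <= N)%N -> forall k, p l k = 0.
  move=> /[dup] /andP[l_gt0 le_lN] l_range k.
  have term_eq0 := psumr_eq0P term_ge0 moment_eq0.
  move: (term_eq0 (Ordinal (le_lN : (l < N.+1)%N)) isT) => /eqP.
  rewrite mulf_eq0 pnatr_eq0 /= (negbTE (lt0n_neq0 l_gt0)) => /eqP window_eq0.
  have [lt_Bk | le_kB] := ltP B%:Z `|k|; first exact: p_supp.
  by apply: (window_sum_nonneg_eq0 (p_ge0 l l_range) window_eq0); lia.
split=> // k; rewrite q_def /sum_shift big_ord_recl /shiftL subr0 big1 ?addr0 //.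
by move=> i _; apply: p_eq0; have := ltn_ord i; rewrite /= /bump; lia.
Qed.
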